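(* Let $r \geq 2$, let $H$ be a digraph (possibly with loops), and let $D$ be an $H$-colored $r$-transitive digraph. For every $l \geq r-1$ and every $k \geq 2$, $D$ has a $(k,l,H)$-kernel.
   Context: All digraphs are finite. A digraph $D$ is $r$-transitive if for all distinct $u,v\in V(D)$, whenever there is a directed $uv$-path of length $r$, the arc $(u,v)$ belongs to $A(D)$. $D$ has no loops and comes with a map $\rho: A(D)\to V(H)$. For a walk $W=(x_0,\ldots,x_n)$ in $D$, there is an obstruction on $x_i$ if $(\rho(x_{i-1},x_i),\rho(x_i,x_{i+1})) \notin A(H)$; for an open walk this is considered at internal vertices $x_i$, $1\le i\le n-1$, for a closed walk at all $i\in\{0,\ldots,n-1\}$ with indices modulo $n$. $O_H(W)$ is the set of indices with an obstruction; the $H$-length is $l_H(W)=|O_H(W)|+1$ for open $W$ and $|O_H(W)|$ for closed $W$. For $k\ge 2$ and $l\ge 1$, a $(k,l,H)$-kernel is a set $S\subseteq V(D)$ such that for every two distinct $u,v\in S$ every directed $uv$-path in $D$ has $H$-length at least $k$, and for every $x\in V(D)\setminus S$ there is a directed path from $x$ to a vertex of $S$ of $H$-length at most $l$. *)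

From mathcomp Require Import all_boot.
Set Implicit Arguments. Unset Strict Implicit. Unset Printing Implicit Defensive.

Section Defs.
Variables (V W : finType) (e : rel V) (hA : rel W) (rho : V -> V -> W).

(* A directed path is a nonempty sequence of pairwise distinct vertices,
   consecutive ones joined by arcs of e. [is_dpath u v s]: s = (x_0,...,x_n)
   is a directed path from u = x_0 to v = x_n; its length is n = size s - 1. *)
Definition is_dpath (u v : V) (s : seq V) : Prop :=
  exists p, s = u :: p /\ path e u p /\ uniq (u :: p) /\ last u p = v.

Definition r_transitive (r : nat) : Prop :=
  forall u v (s : seq V), u != v -> is_dpath u v s -> size s = r.+1 -> e u v.

(* Obstruction at internal index i of the open walk s (default element x0 unused in range). *)
Definition obstruction (x0 : V) (s : seq V) (i : nat) : bool :=
  ~~ hA (rho (nth x0 s i.-1) (nth x0 s i)) (rho (nth x0 s i) (nth x0 s i.+1)).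

Definition H_length (s : seq V) : nat :=
  match s with
  | [::] => 1
  | x0 :: _ => count (obstruction x0 s) (iota 1 (size s - 2)) + 1
  end.

Definition is_klH_kernel (k l : nat) (S : {set V}) : Prop :=
  (forall u v, u \in S -> v \in S -> u != v ->
     forall s, is_dpath u v s -> k <= H_length s)
  /\ (forall x, x \notin S ->
        exists v s, v \in S /\ is_dpath x v s /\ H_length s <= l).
End Defs.

From mathcomp Require Import all_boot zify.

Set Implicit Arguments.
Unset Strict Implicit.
Unset Printing Implicit Defensive.

(* Kernel: one representative (of least rank) from each terminal strong
   component.  No directed path joins two distinct representatives, so the
   first kernel condition is vacuous, and every vertex reaches some
   representative.  By r-transitivity a path with more than r - 1 arcs can be
   shortcut from its origin to its r-th vertex, so that representative is
   reached by a path with at most r - 1 arcs, whose H-length is then at most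
   r - 1 <= l. *)

Section TerminalRepresentatives.
Variables (V : finType) (e : rel V).

Definition terminal_reps : {set V} :=
  [set s | [forall y, connect e s y ==> connect e y s && (enum_rank s <= enum_rank y)]].

Lemma terminal_reps_unreachable u v :
  u \in terminal_reps -> v \in terminal_reps -> u != v -> ~~ connect e u v.
Proof.
rewrite !inE => /forallP hu /forallP hv; apply: contraNN => cuv.
have /andP[cvu le_uv] := implyP (hu v) cuv.
have /andP[_ le_vu] := implyP (hv u) cvu.
by apply/eqP/enum_rank_inj/val_inj/eqP; rewrite eqn_leq le_uv le_vu.
Qed.

Lemma connect_terminal_rep x : exists2 s, s \in terminal_reps & connect e x s.
Proof.
pose reach y := [set z | connect e y z].
(* A vertex with a minimal reachable set lies in a terminal strong component. *)
have [y cxy ymin] := arg_minnP (fun y => #|reach y|) (connect0 e x).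
have [s cys smin] := arg_minnP (fun z => val (enum_rank z)) (connect0 e y).
exists s; last exact: connect_trans cxy cys.
rewrite inE; apply/forallP => w; apply/implyP => csw.
have cyw := connect_trans cys csw.
have sub_wy : reach w \subset reach y.
  by apply/subsetP => z; rewrite !inE; apply: connect_trans.
have eq_wy : reach w = reach y.
  apply/eqP; rewrite eqEcard sub_wy /=.
  exact: ymin (connect_trans cxy cyw).
have : y \in reach w by rewrite eq_wy inE connect0.
by rewrite inE => cwy; rewrite (connect_trans cwy cys) smin.
Qed.

End TerminalRepresentatives.

Lemma dpath_connect (V : finType) (e : rel V) u v s :
  is_dpath e u v s -> connect e u v.
Proof. by case=> p [_ [hp [_ <-]]]; apply/connectP; exists p. Qed.

Section ShortPaths.
Variables (V : finType) (e : rel V) (r : nat).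
Hypotheses (hr : 2 <= r) (htrans : r_transitive e r).

Lemma shortcut_arc x p1 w p2 :
  path e x (p1 ++ w :: p2) -> uniq (x :: p1 ++ w :: p2) -> size p1 = r.-1 ->
  e x w.
Proof.
move=> hp hu hs.
have xw : x != w.
  by apply: contraTneq hu => ->; rewrite /= mem_cat mem_head orbT.
apply: (@htrans x w (x :: rcons p1 w) xw); last first.
  by rewrite /= size_rcons hs prednK // ltnW.
exists (rcons p1 w); split=> //; split; last split; last by rewrite last_rcons.
- by move: hp; rewrite rcons_path cat_path /= => /and3P[-> ->].
- by move: hu; rewrite -cat_rcons -cat_cons cat_uniq => /andP[].
Qed.

Lemma path_shorten_r x p : path e x p -> uniq (x :: p) ->
  exists q, [/\ path e x q, uniq (x :: q), last x q = last x p & size q <= r.-1].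
Proof.
move: {2}(size p) (leqnn (size p)) => n; elim: n x p => [|n IH] x p.
  by rewrite leqn0 => /eqP/size0nil -> *; exists [::].
move=> hn hp hu; have [short|long] := leqP (size p) r.-1; first by exists p.
have := cat_take_drop r.-1 p.
case hdrop: (drop r.-1 p) => [|w p2] p_eq.
  by move: long; rewrite -subn_gt0 -size_drop hdrop.
have exw : e x w.
  by apply: (@shortcut_arc x (take r.-1 p) w p2); rewrite ?p_eq // size_take long.
have hp' : path e x (w :: p2).
  by move: hp; rewrite -p_eq cat_path /= exw => /and3P[_ _ ->].
have hu' : uniq (x :: w :: p2).
  rewrite -hdrop /= drop_uniq ?andbT; last by case/andP: hu.
  by case/andP: hu => hx _; apply: contra hx; apply: mem_drop.
have [|q [hq huq hlast hsize]] := IH x (w :: p2) _ hp' hu'.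
  by move: hn; rewrite -hdrop size_drop; lia.
by exists q; split; rewrite // hlast -p_eq last_cat.
Qed.

Lemma connect_short_dpath x v :
  connect e x v -> exists s, is_dpath e x v s /\ size s <= r.
Proof.
case/connectP=> p /shortenP[p' hp' hu' _ ->].
have [q [hq huq hlast hsize]] := path_shorten_r hp' hu'.
exists (x :: q); split; first by exists q.
by rewrite /= -(prednK (ltnW hr)).
Qed.

End ShortPaths.

Lemma H_length_le_arcs (V W : finType) (hA : rel W) (rho : V -> V -> W) s :
  1 < size s -> H_length hA rho s <= (size s).-1.
Proof.
case: s => [|x s] //= hs.
have := count_size (obstruction hA rho x (x :: s)) (iota 1 ((size s).+1 - 2)).
by rewrite size_iota; lia.
Qed.

Theorem theorem11 (V W : finType) (e : rel V) (hA : rel W) (rho : V -> V -> W)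
  (r : nat) (hr : 2 <= r) (e_irr : irreflexive e)
  (htrans : r_transitive e r) :
  forall l k : nat, r.-1 <= l -> 2 <= k ->
  exists S : {set V}, is_klH_kernel e hA rho k l S.
Proof.
move=> l k hl _; exists (terminal_reps e); split.
  move=> u v uS vS uv s /dpath_connect cuv.
  by move: (terminal_reps_unreachable uS vS uv); rewrite cuv.
move=> x xS; have [v vS cxv] := connect_terminal_rep e x.
have [s [hs size_s]] := connect_short_dpath hr htrans cxv.
have xv : x != v by apply: contraNneq xS => ->.
have s_gt1 : 1 < size s.
  case: hs => [[|y p] [-> [_ [_ hlast]]]] //.
  by move: xv; rewrite -hlast eqxx.
exists v, s; split=> //; split=> //.
apply: leq_trans (H_length_le_arcs hA rho s_gt1) _.
by apply: leq_trans hl; rewrite -!subn1 leq_sub2r.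
Qed.
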